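(* The pair $(g,\eta)$ forms an exact pencil: with $e=\frac{\partial}{\partial u_{n-1}}$ one has $\mathcal{L}_e g=\eta$ and $\mathcal{L}_e\eta=0$.
   Context: $n\ge2$. $B_n$ acts on $\mathbb{C}^n$ (coordinates $p_1,\dots,p_n$) by permutations and sign changes. $u_k=\sum_{1\le i_1<\dots<i_k\le n}p_{i_1}^2\cdots p_{i_k}^2$ ($k=1,\dots,n$) are coordinates on the orbit space. $g$ is the cometric $g^{ij}(u)=\sum_{k,l}\frac{1-\delta^{kl}}{p_kp_l}\frac{\partial u_i}{\partial p_k}\frac{\partial u_j}{\partial p_l}$ (a polynomial in $u$) and $\eta^{ij}(u)=\frac{\partial g^{ij}}{\partial u_{n-1}}(u)$; $(g,\eta)$ is a flat pencil of contravariant metrics. $\mathcal{L}$ denotes the Lie derivative. *)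

From HB Require Import structures.
From mathcomp Require Import all_boot all_order all_algebra.
From mathcomp Require Import mpoly complex.
Set Implicit Arguments. Unset Strict Implicit. Unset Printing Implicit Defensive.
Import Order.TTheory GRing.Theory Num.Theory.
Local Open Scope ring_scope.

Section BnDefs.
Variables (K : comNzRingType) (n : nat).

(* u_{i+1} = sum_{|S| = i+1} prod_{l in S} p_l^2, as a polynomial in p_0..p_{n-1}
   (index i : 'I_n stands for u_{i+1}). *)
Definition uB (i : 'I_n) : {mpoly K[n]} :=
  \sum_(S : {set 'I_n} | #|S| == i.+1) \prod_(l in S) ('X_l ^+ 2).

Definition uOf (p : 'I_n -> K) : 'I_n -> K := fun i => meval p (uB i).

(* Components of the coordinate vector field d/du_m in u-coordinates. *)
Definition coordVF (m : 'I_n) : 'I_n -> {mpoly K[n]} :=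
  fun k => ((k == m)%:R)%:MP.

(* Lie derivative of a contravariant 2-tensor field T^{ij}(u) along the
   vector field X^k(u), both with polynomial components in coordinates u:
   (L_X T)^{ij} = X^k d_k T^{ij} - (d_k X^i) T^{kj} - (d_k X^j) T^{ik}. *)
Definition lie2 (X : 'I_n -> {mpoly K[n]}) (T : 'I_n -> 'I_n -> {mpoly K[n]})
  : 'I_n -> 'I_n -> {mpoly K[n]} :=
  fun i j => \sum_(k < n) (X k * mderiv k (T i j))
           - \sum_(k < n) (mderiv k (X i) * T k j)
           - \sum_(k < n) (mderiv k (X j) * T i k).

End BnDefs.

Section Cometric.
Variables (F : fieldType) (n : nat).
(* g^{ij} as a function of p (on the locus where all p_k <> 0):
   sum_{k <> l} 1/(p_k p_l) du_i/dp_k du_j/dp_l. *)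
Definition gB_p (p : 'I_n -> F) (i j : 'I_n) : F :=
  \sum_(k < n) \sum_(l < n | k != l)
     (p k * p l)^-1 * meval p (mderiv k (uB F i)) * meval p (mderiv l (uB F j)).

Definition is_cometric_u (G : 'I_n -> 'I_n -> {mpoly F[n]}) : Prop :=
  forall p : 'I_n -> F, (forall k, p k != 0) ->
    forall i j, meval (uOf p) (G i j) = gB_p p i j.
End Cometric.

(* The index n-2 : 'I_n (coordinate u_{n-1}), for n >= 2. *)
Lemma sub2_lt (n : nat) : (2 <= n)%N -> (n - 2 < n)%N.
Proof. by move=> hn; rewrite ltn_subrL (leq_trans _ hn). Qed.
Definition idx_nm1 (n : nat) (hn : (2 <= n)%N) : 'I_n := Ordinal (sub2_lt hn).

From HB Require Import structures.
From mathcomp Require Import all_boot all_order all_algebra.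
From mathcomp Require Import mpoly complex perm ring zify.
From Stdlib Require Import FunctionalExtensionality.
Import Order.TTheory GRing.Theory Num.Theory.
Local Open Scope ring_scope.
Set Implicit Arguments. Unset Strict Implicit. Unset Printing Implicit Defensive.

(* In the squared coordinates x_k = p_k^2 the entry g^{ij} becomes the
   symmetric polynomial 4 sum_{k <> l} (d e_i/dx_k) (d e_j/dx_l), homogeneous of
   degree i + j - 2. By the fundamental theorem on symmetric polynomials g^{ij}
   is therefore a polynomial in u = (e_1, ..., e_n), weighted homogeneous of
   weight i + j - 2 when u_k has weight k; it is unique because a polynomial
   vanishing on the torus (every point of which is a square) is zero.
   As e = d/du_{n-1} has constant components, L_e g = dg/du_{n-1} = eta and
   L_e eta = d^2 g/du_{n-1}^2. A monomial divisible by u_{n-1}^2 has weight at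
   least 2n - 2, so only g^{nn} = 8 u_n u_{n-2} could contain one, and it does
   not. *)

Lemma poly_eq0_on_nonzero (C : numDomainType) (P : {poly C}) :
  (forall t, t != 0 -> P.[t] = 0) -> P = 0.
Proof.
move=> P0; apply/eqP; apply: contraT => nzP.
pose roots := [seq i.+1%:R : C | i <- iota 0 (size P)].
suff : (size roots < size P)%N by rewrite size_map size_iota ltnn.
apply: max_poly_roots nzP _ _.
- by apply/allP => _ /mapP[i _ ->]; rewrite /root P0 ?pnatr_eq0.
- rewrite map_inj_uniq ?iota_uniq // => i j /eqP.
  by rewrite eqr_nat eqSS => /eqP.
Qed.

Section MuniCoeffEval.
Variables (C : comNzRingType) (n : nat).
Implicit Types (p : {mpoly C[n.+1]}) (m : 'X_{1..n.+1}).

Local Notation wid := (widen_ord (leqnSn n)).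

Lemma widen_lift_max (i : 'I_n) : wid i = lift ord_max i.
Proof. by apply/val_inj; rewrite /= /bump leqNgt ltn_ord. Qed.

Definition mnm_drop_last m : 'X_{1..n} := [multinom m (wid i) | i < n].

Lemma eq_mnm_drop_last m m' :
  (mnm_drop_last m' == mnm_drop_last m) && (m' ord_max == m ord_max) = (m' == m).
Proof.
apply/idP/eqP => [/andP[/eqP e /eqP el]|-> //]; last by rewrite !eqxx.
apply/mnmP => i; case: (unliftP ord_max i) => [j ->|-> //].
by move/mnmP/(_ j): e; rewrite !mnmE widen_lift_max.
Qed.

Lemma mcoeff_muni p m : ((muni p)`_(m ord_max))@_(mnm_drop_last m) = p@_m.
Proof.
rewrite muniE coef_sum raddf_sum [in RHS](mpolyE p) raddf_sum /=.
apply: eq_bigr => m' _; rewrite coefZ coefXn mulr_natr mcoeffMn !mcoeffZ !mcoeffX.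
rewrite -/(mnm_drop_last m') -eq_mnm_drop_last [_ ord_max == _]eq_sym.
by case: (_ == _); case: (_ == _); rewrite ?mulr0 ?mulr1.
Qed.

Lemma meval_muni p (v : 'I_n.+1 -> C) :
  p.@[v] = ((muni p).[(v ord_max)%:MP]).@[fun i => v (wid i)].
Proof.
rewrite muniE horner_sum rmorph_sum mevalE; apply: eq_bigr => m _.
rewrite hornerZ hornerXn rmorphM rmorphXn /= mevalZ mevalX mevalC.
rewrite big_ord_recr /= -mulrA; congr (_ * (_ * _)).
by apply: eq_bigr => i _; rewrite mnmE.
Qed.

End MuniCoeffEval.

Lemma mpoly_eq0_on_nonzero (C : numDomainType) n (p : {mpoly C[n]}) :
  (forall v : 'I_n -> C, (forall k, v k != 0) -> p.@[v] = 0) -> p = 0.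
Proof.
elim: n p => [|n IH] p p0.
  have pC : p = (p@_0)%:MP.
    apply/mpolyP => m; have -> : m = 0%MM by apply/mnmP => -[].
    by rewrite mcoeffC eqxx mulr1.
  by rewrite pC -[p@_0](mevalC (fun _ : 'I_0 => 0 : C)) -pC p0 // => -[].
suff pu0 : muni p = 0 by apply/mpolyP => m; rewrite -mcoeff_muni pu0 coef0 !mcoeff0.
apply/polyP => k; rewrite coef0; apply: IH => w w0.
suff mu0 : map_poly (meval w) (muni p) = 0.
  by have := congr1 (fun q : {poly C} => q`_k) mu0; rewrite coef_map coef0.
apply: poly_eq0_on_nonzero => t t0.
pose v i := oapp w t (unlift ord_max i).
have vw : (fun i => v (widen_ord (leqnSn n) i)) =1 w.
  by move=> i; rewrite /v widen_lift_max liftK.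
have vt : v ord_max = t by rewrite /v unlift_none.
rewrite -[t](mevalC w) horner_map /= -(meval_eq _ vw) -vt -meval_muni.
by apply: p0 => i; rewrite /v; case: (unlift _ i).
Qed.

Section SquaredCoordinates.
Variables (K : comNzRingType) (n : nat).
Implicit Types (p : 'I_n -> K) (h : {set 'I_n}) (k : 'I_n).

Definition squares p : 'I_n -> K := fun k => p k ^+ 2.

Lemma mderiv_mesym1 k h : mderiv k ('X_[mesym1 h] : {mpoly K[n]}) =
  if k \in h then 'X_[mesym1 (h :\ k)] else 0.
Proof.
rewrite mderivX mnmE; case: (boolP (k \in h)) => hk; last by rewrite scale0r.
rewrite scale1r; congr 'X_[_]; apply/mnmP => i; rewrite !mnmE in_setD1.
by rewrite eq_sym; case: eqP => [->|_]; rewrite ?hk ?subn0.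
Qed.

Lemma mderiv_mesym1_sq k h : mderiv k ('X_[mesym1 h *+ 2] : {mpoly K[n]}) =
  if k \in h then ('X_k * 'X_[mesym1 (h :\ k) *+ 2]) *+ 2 else 0.
Proof.
rewrite mderivX mulmnE mnmE; case: (boolP (k \in h)) => hk; last first.
  by rewrite mul0n scale0r.
rewrite mul1n -scaler_nat -mpolyXD; congr (_ *: 'X_[_]); apply/mnmP => i.
rewrite !mnmE in_setD1; case: (eqVneq k i) => [<-|ki] /=; first by rewrite hk.
by rewrite subn0 add0n.
Qed.

Lemma meval_mnm_sq p (m : 'X_{1..n}) : 'X_[m *+ 2].@[p] = 'X_[m].@[squares p].
Proof.
by rewrite !mevalX; apply: eq_bigr => i _; rewrite mulmnE mulnC exprM.
Qed.

Lemma uB_mesym1 (i : 'I_n) :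
  uB K i = \sum_(h : {set 'I_n} | #|h| == i.+1) 'X_[mesym1 h *+ 2].
Proof.
apply: eq_bigr => h _; rewrite mpolyXE_id [LHS]big_mkcond /=.
apply: eq_bigr => l _; rewrite mulmnE !mnmE.
by case: (l \in h); rewrite ?mul1n ?mul0n ?expr0.
Qed.

Lemma meval_uB p (i : 'I_n) : (uB K i).@[p] = (mesym n K i.+1).@[squares p].
Proof.
rewrite uB_mesym1 mesymE !rmorph_sum; apply: eq_bigr => h _.
exact: meval_mnm_sq.
Qed.

Lemma meval_mderiv_uB p (i k : 'I_n) :
  (mderiv k (uB K i)).@[p] = 2%:R * p k * (mderiv k (mesym n K i.+1)).@[squares p].
Proof.
rewrite uB_mesym1 mesymE !(raddf_sum (mderiv k)) !rmorph_sum mulr_sumr.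
apply: eq_bigr => h _ /=.
rewrite mderiv_mesym1_sq mderiv_mesym1; case: (k \in h); last by rewrite !rmorph0 mulr0.
by rewrite mevalMn mevalM mevalXU meval_mnm_sq mulr_natl mulrnAl.
Qed.

Lemma meval_uOf p (G : {mpoly K[n]}) :
  G.@[uOf p] = (G \mPo [tuple mesym n K i.+1 | i < n]).@[squares p].
Proof.
by rewrite comp_mpoly_meval; apply: meval_eq => i; rewrite tnth_mktuple /uOf meval_uB.
Qed.

End SquaredCoordinates.

Lemma sum_ordered_pairs (V : nmodType) n (F : {set 'I_n} -> V) :
  \sum_(k < n) \sum_(l < n | k != l) F [set k; l] =
  (\sum_(h : {set 'I_n} | #|h| == 2) F h) *+ 2.
Proof.
rewrite pair_big_dep /=.
rewrite (partition_big (fun x => [set x.1; x.2]) (fun h => #|h| == 2)) /=;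
  last by move=> [k l] /= kl; rewrite cards2 kl.
rewrite -sumrMnl; apply: eq_bigr => _ /cards2P[a [b [ab ->]]].
rewrite (eq_bigr (fun _ => F [set a; b])); last by move=> x /andP[_ /eqP ->].
rewrite sumr_const; congr (_ *+ _).
transitivity #|pred2 (a, b) (b, a)|; last by rewrite card2 xpair_eqE negb_and ab.
apply: eq_card => -[k l]; rewrite !inE /=; apply/idP/idP => [/andP[kl /eqP E]|].
  have : (k \in [set a; b]) && (l \in [set a; b]) by rewrite -E set21 set22.
  by move: kl; rewrite !inE => /[swap] /andP[/orP[]/eqP-> /orP[]/eqP->];
    rewrite ?eqxx ?orbT.
move=> /orP[]/eqP[-> ->]; rewrite unfold_in /=; first by rewrite ab eqxx.
by rewrite eq_sym ab setUC eqxx.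
Qed.

Section CometricSquares.
Variables (K : comNzRingType) (n : nat).

(* g^{i+1, j+1} in the coordinates x_k = p_k^2: as du/dp_k = 2 p_k du/dx_k,
   the factor 1/(p_k p_l) cancels. *)
Definition cometric_sq (i j : nat) : {mpoly K[n]} :=
  \sum_(k < n) \sum_(l < n | k != l)
    (mderiv k (mesym n K i.+1) * mderiv l (mesym n K j.+1)) *+ 4.

Lemma msym_mderiv (s : 'S_n) k (f : {mpoly K[n]}) :
  msym s (mderiv k f) = mderiv (s k) (msym s f).
Proof.
apply/mpolyP => m; rewrite mcoeff_sym !mcoeff_mderiv mcoeff_sym mnmE.
by congr (f@_ _ *+ _); apply/mnmP => i; rewrite !mnmE (inj_eq perm_inj).
Qed.

Lemma mderiv_mesym_homog k d : mderiv k (mesym n K d.+1) \is d.-homog.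
Proof.
rewrite mesymE raddf_sum /=; apply: rpred_sum => h /eqP hd.
rewrite mderiv_mesym1; case: ifP => hk; last exact: dhomog0.
rewrite dhomogX; apply/eqP; apply: etrans (mdeg_mesym1 _) _.
by move: hd; rewrite (cardsD1 k h) hk add1n => -[].
Qed.

Lemma cometric_sq_sym i j : cometric_sq i j \is symmetric.
Proof.
apply/issymP => s; rewrite raddf_sum [RHS](reindex_inj (@perm_inj _ s)) /=.
apply: eq_bigr => k _; rewrite raddf_sum /= [RHS](reindex_inj (@perm_inj _ s)) /=.
apply: eq_big => [l|l _]; first by rewrite (inj_eq perm_inj).
by rewrite msymMn msymM !msym_mderiv !(issymP _ (mesym_sym _ _ _)).
Qed.

Lemma cometric_sq_homog i j : cometric_sq i j \is (i + j)%N.-homog.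
Proof.
apply: rpred_sum => k _; apply: rpred_sum => l _; apply: rpredMn.
exact: dhomogM (mderiv_mesym_homog _ _) (mderiv_mesym_homog _ _).
Qed.

Lemma mesymnn_mesym1 : mesym n K n = 'X_[mesym1 [set: 'I_n]].
Proof.
rewrite mesymE (big_pred1 setT) // => h /=.
have := max_card h; rewrite card_ord => hn.
by rewrite eqEcard subsetT cardsT card_ord eqn_leq hn.
Qed.

Lemma mesym_setC k : (k <= n)%N ->
  mesym n K (n - k) = \sum_(h : {set 'I_n} | #|h| == k) 'X_[mesym1 (~: h)].
Proof.
move=> kn; rewrite mesymE (reindex_inj (@setC_inj _)) /=.
apply: eq_big => // h.
have := cardsC h; rewrite card_ord; move: #|h| #|~: h| => a b hC.
by apply/eqP/eqP; lia.
Qed.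

Lemma cometric_sq_last : (2 <= n)%N ->
  cometric_sq n.-1 n.-1 = (mesym n K n * mesym n K (n - 2)) *+ 8.
Proof.
move=> n2; rewrite /cometric_sq prednK; last exact: leq_trans n2.
have mderiv_top k : mderiv k (mesym n K n) = 'X_[mesym1 (~: [set k])].
  by rewrite mesymnn_mesym1 mderiv_mesym1 in_setT setTD.
under eq_bigr => k _.
  under eq_bigr => l kl.
    rewrite !mderiv_top -mpolyXD.
    have -> : (mesym1 (~: [set k]) + mesym1 (~: [set l]) =
               mesym1 [set: 'I_n] + mesym1 (~: [set k; l]))%MM.
      apply/mnmP => x; rewrite !mnmE !inE.
      by case: (eqVneq x k) => [->|]; [rewrite (negbTE kl) | case: (x == l)].
    rewrite mpolyXD; over.
  over.
rewrite (sum_ordered_pairs (fun h => _ * 'X_[mesym1 (~: h)] *+ 4)).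
by rewrite sumrMnl -mulr_sumr -mesym_setC // -mesymnn_mesym1 -mulrnA.
Qed.

End CometricSquares.

Section MesymMonomial.
Variables (K : comNzRingType) (n : nat).

Definition mnm_mesym (k : nat) : 'X_{1..n} := [multinom (i.+1 == k : nat) | i < n].

Lemma comp_mnm_mesym k : (k <= n)%N ->
  'X_[mnm_mesym k] \mPo [tuple mesym n K i.+1 | i < n] = mesym n K k.
Proof.
rewrite comp_mpolyX; case: k => [_|k kn].
  by rewrite mesym0E big1 // => i _; rewrite mnmE expr0.
rewrite (bigD1 (Ordinal kn)) //= big1 ?mulr1 => [|i ik].
  by rewrite tnth_mktuple mnmE eqxx expr1.
rewrite mnmE eqSS; case: eqP => [ik'|_]; last exact: expr0.
by move: ik; rewrite -val_eqE /= ik' eqxx.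
Qed.

End MesymMonomial.

Lemma gB_p_sq (F : fieldType) n (p : 'I_n -> F) (i j : 'I_n) :
  (forall k, p k != 0) -> gB_p p i j = (cometric_sq F n i j).@[squares p].
Proof.
move=> p0; rewrite /gB_p [RHS]rmorph_sum /=; apply: eq_bigr => k _.
rewrite [RHS]rmorph_sum /=; apply: eq_bigr => l _.
rewrite !meval_mderiv_uB mevalMn mevalM.
by field; rewrite p0 p0.
Qed.

Lemma exists_cometric (F : fieldType) n :
  exists G : 'I_n -> 'I_n -> {mpoly F[n]}, is_cometric_u G.
Proof.
exists (fun a b => sval (sym_fundamental (cometric_sq_sym F n a b))) => p p0 a b.
by rewrite meval_uOf (proj1 (svalP (sym_fundamental _))) gB_p_sq.
Qed.

Section Cometric.
Variables (C : numClosedFieldType) (n : nat) (G : 'I_n -> 'I_n -> {mpoly C[n]}).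
Hypothesis G_cometric : is_cometric_u G.
Local Notation S := [tuple mesym n C i.+1 | i < n].

Lemma cometric_comp a b : G a b \mPo S = cometric_sq C n a b.
Proof.
apply/eqP; rewrite -subr_eq0; apply/eqP; apply: mpoly_eq0_on_nonzero => v v0.
pose p k := sqrtC (v k).
have p0 k : p k != 0 by rewrite sqrtC_eq0.
have pv : squares p =1 v by move=> k; rewrite /squares sqrtCK.
by rewrite mevalB -!(meval_eq _ pv) -meval_uOf G_cometric // gB_p_sq // subrr.
Qed.

Lemma cometric_wgt_homog a b : G a b \is (a + b)%N.-homog for mnmwgt.
Proof. by rewrite mwmwgt_homogE cometric_comp cometric_sq_homog. Qed.

Lemma cometric_last (a : 'I_n) : (2 <= n)%N -> a.+1 = n ->
  G a a = 'X_[mnm_mesym n n + mnm_mesym n (n - 2)] *+ 8.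
Proof.
move=> n2 an; apply: msym_fundamental_un.
rewrite cometric_comp comp_mpolyMn mpolyXD rmorphM /= !comp_mnm_mesym ?leq_subr //.
have -> : val a = n.-1 by rewrite -[n in RHS]an.
exact: cometric_sq_last.
Qed.

Lemma mderiv2_cometric (hn : (2 <= n)%N) a b :
  mderiv (idx_nm1 hn) (mderiv (idx_nm1 hn) (G a b)) = 0.
Proof.
set m := idx_nm1 hn.
apply/mpolyP => mu; rewrite !mcoeff_mderiv mcoeff0.
suff -> : (G a b)@_(mu + U_(m) + U_(m)) = 0 by rewrite !mul0rn.
apply/eqP; rewrite mcoeff_eq0; apply/negP => supp.
have /dhomogP/(_ _ supp) := cometric_wgt_homog a b.
rewrite /= !mnmwgtD !mnmwgt1 /= => wgt.
have ha := ltn_ord a; have hb := ltn_ord b.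
have an : a.+1 = n by lia.
have ba : b = a by apply: ord_inj; lia.
move: supp; rewrite ba cometric_last // mcoeff_msupp mcoeffMn mcoeffX.
suff /negbTE-> : (mnm_mesym n n + mnm_mesym n (n - 2) != mu + U_(m) + U_(m))%MM.
  by rewrite mul0rn eqxx.
by apply/eqP => /mnmP/(_ m); rewrite !mnmE /= eqxx; lia.
Qed.

End Cometric.

Lemma lie2_coordVF (K : comNzRingType) n (m : 'I_n)
    (T : 'I_n -> 'I_n -> {mpoly K[n]}) :
  lie2 (coordVF K m) T = fun i j => mderiv m (T i j).
Proof.
apply: functional_extensionality => i; apply: functional_extensionality => j.
rewrite /lie2 /coordVF (bigD1 m) //= eqxx mpolyC1 mul1r big1 ?addr0; last first.
  by move=> k km; rewrite (negbTE km) mpolyC0 mul0r.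
by rewrite !big1 ?subr0 // => k _; rewrite mderivC mul0r.
Qed.

Theorem mainTheorem14 (R : rcfType) (n : nat) (hn : (2 <= n)%N) :
  let m : 'I_n := idx_nm1 hn in
  let e := coordVF R[i] m in
  (exists G : 'I_n -> 'I_n -> {mpoly R[i][n]}, is_cometric_u G) /\
  forall G : 'I_n -> 'I_n -> {mpoly R[i][n]},
    is_cometric_u G ->
    let eta := fun a b => mderiv m (G a b) in
    lie2 e G = eta /\ lie2 e eta = (fun _ _ => 0).
Proof.
move=> m e; split; first exact: exists_cometric.
move=> G hG eta; rewrite /e !lie2_coordVF; split => //.
apply: functional_extensionality => a; apply: functional_extensionality => b.
exact: mderiv2_cometric.
Qed.
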